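(* Let $F=(C_1,\dots,C_m)$ be a flag of almost affine codes of length $n$, $E=\{1,\dots,n\}$, and let $r_i$ be the rank function of the matroid associated to $C_i$. Define $\eta_F=\sum_{i=1}^m(-1)^{m-i}r_i^*$, $\theta_F=\sum_{i=1}^m(-1)^{i+1}\overline{r_i}$, $\pi_F=\sum_{i=1}^m(-1)^{m-i}\overline{r_i^*}$, and $\rho_F=\sum_{i=1}^m(-1)^{i+1}r_i$. Then $(E,\eta_F)$, $(E,\theta_F)$ and $(E,\pi_F)$ are demi-matroids, and moreover $\theta_F=\overline{\rho_F}$; $\eta_F=\overline{\rho_F}$ if $m$ is even and $\eta_F=\rho_F^*$ if $m$ is odd; $\pi_F=\rho_F$ if $m$ is even and $\pi_F=(\overline{\rho_F})^*$ if $m$ is odd.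
   Context: An almost affine code over a finite alphabet $A$ of length $n$ and dimension $k$ is a subset $C\subseteq A^n$ with $|C|=|A|^k$ such that for every $X\subseteq E$, $\log_{|A|}|C_X|$ is a nonnegative integer ($C_X$ = projection onto coordinates $X$); its associated matroid has rank function $r(X)=\log_{|A|}|C_X|$. A flag of almost affine codes is a sequence $(C_1,\dots,C_m)$ of almost affine codes over the same alphabet and of the same length with each $C_{j+1}\subseteq C_j$ itself an almost affine code. A demi-matroid is $(E,r)$ with $r:2^E\to\mathbb{N}$, $r(\emptyset)=0$, and $r(X)\le r(X\cup\{x\})\le r(X)+1$. For any function $r$ on $2^E$: $r^*(X)=|X|+r(E\setminus X)-r(E)$ and $\overline{r}(X)=r(E)-r(E\setminus X)$. *)

From HB Require Import structures.
From mathcomp Require Import all_boot all_order all_algebra.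
Set Implicit Arguments. Unset Strict Implicit. Unset Printing Implicit Defensive.
Import Order.TTheory GRing.Theory Num.Theory.
Local Open Scope ring_scope.

(* Codes of length n over the finite alphabet A are sets of words
   w : {ffun 'I_n -> A}; coordinates E = 'I_n (i.e. {1..n} shifted to {0..n-1}). *)

Definition proj (A : finType) (n : nat) (C : {set {ffun 'I_n -> A}})
  (X : {set 'I_n}) : {set {ffun 'I_n -> option A}} :=
  [set [ffun i => if i \in X then Some (w i) else None] | w : {ffun 'I_n -> A} in C].

Definition almost_affine (A : finType) (n : nat) (C : {set {ffun 'I_n -> A}}) : Prop :=
  (exists k : nat, #|C| = (#|A| ^ k)%N) /\
  (forall X : {set 'I_n}, exists r : nat, #|proj C X| = (#|A| ^ r)%N).

(* Rank function of the associated matroid: r(X) = log_{|A|} |C_X|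
   (exact for almost affine codes). Valued in int for the alternating sums. *)
Definition code_rank (A : finType) (n : nat) (C : {set {ffun 'I_n -> A}})
  (X : {set 'I_n}) : int := (trunc_log #|A| #|proj C X|)%:Z.

Definition is_flag (A : finType) (n m : nat) (C : nat -> {set {ffun 'I_n -> A}}) : Prop :=
  (forall i, (1 <= i <= m)%N -> almost_affine (C i)) /\
  (forall i, (1 <= i < m)%N -> C i.+1 \subset C i).

Definition dual (n : nat) (r : {set 'I_n} -> int) (X : {set 'I_n}) : int :=
  (#|X|%:Z + r (~: X) - r setT).

Definition cobar (n : nat) (r : {set 'I_n} -> int) (X : {set 'I_n}) : int :=
  r setT - r (~: X).

Definition demi_matroid (n : nat) (r : {set 'I_n} -> int) : Prop :=
  r set0 = 0 /\
  (forall X : {set 'I_n}, 0 <= r X) /\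
  (forall (X : {set 'I_n}) (x : 'I_n), r X <= r (x |: X) <= r X + 1).

Section FlagFunctions.
Variables (A : finType) (n m : nat) (C : nat -> {set {ffun 'I_n -> A}}).

Definition rk (i : nat) : {set 'I_n} -> int := code_rank (C i).

Definition eta_F (X : {set 'I_n}) : int :=
  \sum_(1 <= i < m.+1) (-1) ^+ (m - i) * dual (rk i) X.
Definition theta_F (X : {set 'I_n}) : int :=
  \sum_(1 <= i < m.+1) (-1) ^+ (i.+1) * cobar (rk i) X.
Definition pi_F (X : {set 'I_n}) : int :=
  \sum_(1 <= i < m.+1) (-1) ^+ (m - i) * cobar (dual (rk i)) X.
Definition rho_F (X : {set 'I_n}) : int :=
  \sum_(1 <= i < m.+1) (-1) ^+ (i.+1) * rk i X.
End FlagFunctions.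

From HB Require Import structures.
From mathcomp Require Import all_boot all_order all_algebra.
From mathcomp Require Import zify ring.
Set Implicit Arguments. Unset Strict Implicit. Unset Printing Implicit Defensive.
Import Order.TTheory GRing.Theory Num.Theory.
Local Open Scope ring_scope.

(* Writing r^* X = |X| - cobar r X, the functions eta_F, theta_F and pi_F become,
   according to the parity of m, one of rho_F, cobar rho_F, rho_F^* and
   (cobar rho_F)^*; both operations preserve demi-matroids, so it suffices that
   rho_F is one.  Its increment at x is the alternating sum of the increments of
   the r_i.  Each of these is 0 or 1 because |C_(X+x)| <= |A| |C_X|, and they
   are nonincreasing in i: if r_i does not grow at x, then restriction to X is
   injective on (C_i)_(X+x), hence on (C_(i+1))_(X+x).  An alternating sum of a
   nonincreasing sequence in [0, 1] lies in [0, 1]. *)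

Lemma alternating_sum_bounds (R : numDomainType) (b : nat -> R) (k : nat) :
  (forall i, (i <= k)%N -> 0 <= b i) -> (forall i, (i < k)%N -> b i.+1 <= b i) ->
  0 <= \sum_(0 <= i < k.+1) (-1) ^+ i * b i <= b 0%N.
Proof.
elim: k b => [|k IH] b b_ge0 b_decr; first by rewrite big_nat1 mul1r lexx b_ge0.
rewrite big_nat_recl // expr0 mul1r.
under eq_bigr do rewrite exprS mulN1r mulNr.
rewrite sumrN.
have /andP[tail_ge0 tail_le] := IH (fun i => b i.+1)
  (fun i hi => b_ge0 i.+1 hi) (fun i hi => b_decr i.+1 hi).
have b10 := b_decr 0%N isT.
by rewrite gerDl oppr_le0 tail_ge0 andbT subr_ge0 (le_trans tail_le).
Qed.

Lemma alternating_sum1_bounds (R : numDomainType) (a : nat -> R) (m : nat) :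
  (forall i, (1 <= i <= m)%N -> 0 <= a i <= 1) ->
  (forall i, (1 <= i < m)%N -> a i.+1 <= a i) ->
  0 <= \sum_(1 <= i < m.+1) (-1) ^+ i.+1 * a i <= 1.
Proof.
case: m => [|k] a_unit a_decr; first by rewrite big_geq ?lexx ?ler01.
rewrite big_add1 /=.
under eq_bigr do rewrite !exprS !mulN1r opprK.
have /andP[_ a1_le1] := a_unit 1%N isT.
have /andP[-> /le_trans ->] // := @alternating_sum_bounds _ (fun i => a i.+1) k
  (fun i hi => proj1 (andP (a_unit i.+1 hi))) (fun i hi => a_decr i.+1 hi).
Qed.

Lemma sum_signr_succ (R : pzRingType) (m : nat) :
  \sum_(1 <= i < m.+1) (-1) ^+ i.+1 = (odd m)%:R :> R.
Proof.
elim: m => [|m IH]; first by rewrite big_geq.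
rewrite big_nat_recr //= IH -signr_odd /=.
by case: (odd m); rewrite /= ?expr0 ?addrN ?add0r.
Qed.

Lemma alternating_sum_rev_sub (R : comPzRingType) (c : R) (f : nat -> R) (m : nat) :
  \sum_(1 <= i < m.+1) (-1) ^+ (m - i) * (c - f i) =
  (odd m)%:R * c + (-1) ^+ m * \sum_(1 <= i < m.+1) (-1) ^+ i.+1 * f i.
Proof.
have sign_rev i : (i <= m)%N -> (-1) ^+ (m - i) = - (-1) ^+ m * (-1) ^+ i.+1 :> R.
  move=> le_im; rewrite -signr_odd oddB // signr_addb !signr_odd exprS.
  by rewrite mulN1r mulrN mulNr opprK.
transitivity (- (-1) ^+ m * \sum_(1 <= i < m.+1) (-1) ^+ i.+1 * (c - f i)).
  by rewrite mulr_sumr; apply: eq_big_nat => i /andP[_ /sign_rev ->]; rewrite mulrA.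
under eq_bigr do rewrite mulrBr.
rewrite sumrB -mulr_suml sum_signr_succ mulrBr mulrA !mulNr opprK; congr (_ + _).
rewrite -signr_odd; case: (odd m) => /=.
  by rewrite expr1 mulr1 mulN1r opprK mul1r.
by rewrite mulr0 !mul0r oppr0.
Qed.

Section SetFunctions.
Variable n : nat.
Implicit Types (f g : {set 'I_n} -> int) (X : {set 'I_n}) (x : 'I_n).

Definition unit_increasing f :=
  forall X x, x \notin X -> 0 <= f (x |: X) - f X <= 1.

Lemma setU1_setCU1 X x : x \notin X -> x |: ~: (x |: X) = ~: X.
Proof. by move=> xNX; apply/setP => y; rewrite !inE; case: eqP => // ->. Qed.

Lemma cobar_set0 f : cobar f set0 = 0.
Proof. by rewrite /cobar setC0 subrr. Qed.

Lemma dual_set0 f : dual f set0 = 0.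
Proof. by rewrite /dual setC0 cards0 add0r subrr. Qed.

Lemma dualE f X : dual f X = #|X|%:Z - cobar f X.
Proof. by rewrite /dual /cobar opprB addrA. Qed.

Lemma cobar_dual f X : cobar (dual f) X = #|X|%:Z - f X + f set0.
Proof.
by rewrite /cobar /dual setCT setCK cardsT -(cardsC X) PoszD; ring.
Qed.

Lemma dual_cobar f X : dual (cobar f) X = #|X|%:Z - f X + f set0.
Proof. rewrite /cobar /dual setCT setCK; ring. Qed.

Lemma cobar_setU1 f X x : x \notin X ->
  cobar f (x |: X) - cobar f X = f (x |: ~: (x |: X)) - f (~: (x |: X)).
Proof. by move=> xNX; rewrite /cobar setU1_setCU1 //; ring. Qed.

Lemma unit_increasing_cobar f : unit_increasing f -> unit_increasing (cobar f).
Proof.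
move=> f_incr X x xNX; rewrite cobar_setU1 //; apply: f_incr.
by rewrite !inE eqxx.
Qed.

Lemma unit_increasing_dual f : unit_increasing f -> unit_increasing (dual f).
Proof.
move=> /unit_increasing_cobar cobar_incr X x xNX.
rewrite !dualE cardsU1 xNX PoszD.
have := cobar_incr X x xNX; move: (cobar f _) (cobar f _); clear; lia.
Qed.

Lemma demi_matroidP f : f set0 = 0 -> unit_increasing f -> demi_matroid f.
Proof.
move=> f0 f_incr.
have f_step X x : f X <= f (x |: X) <= f X + 1.
  have [xX | xNX] := boolP (x \in X); last first.
    by have := f_incr X x xNX; lia.
  have -> : x |: X = X by apply/setUidPr; rewrite sub1set.
  by rewrite lexx lerDl.
split=> //; split=> // X.
elim: {X}#|X| {-2}X (erefl #|X|) => [|k IH] X card_X.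
  by move/eqP: card_X; rewrite cards_eq0 => /eqP ->; rewrite f0.
have /set0Pn[x xX] : X != set0 by rewrite -card_gt0 card_X.
rewrite -(setD1K xX); have /andP[+ _] := f_step (X :\ x) x; apply: le_trans.
by apply: IH; move: card_X; rewrite (cardsD1 x) xX => -[].
Qed.

Lemma demi_matroid_eq f g : f =1 g -> demi_matroid g -> demi_matroid f.
Proof.
move=> fg [g0 [g_ge0 g_step]]; split; first by rewrite fg.
by split=> [X|X x]; rewrite !fg.
Qed.
End SetFunctions.

Section Codes.
Variables (A : finType) (n : nat).
Implicit Types (C D : {set {ffun 'I_n -> A}}) (X Y Z : {set 'I_n}) (x : 'I_n).

Definition restrict Y (g : {ffun 'I_n -> option A}) : {ffun 'I_n -> option A} :=
  [ffun i => if i \in Y then g i else None].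

Lemma proj_restrict C Y Z : Y \subset Z -> restrict Y @: proj C Z = proj C Y.
Proof.
move=> sYZ; rewrite /proj -imset_comp; apply: eq_imset => w /=.
apply/ffunP => i; rewrite !ffunE; case: ifP => // iY.
by rewrite (subsetP sYZ _ iY).
Qed.

Lemma proj_subset C D X : D \subset C -> proj D X \subset proj C X.
Proof. exact: imsetS. Qed.

Lemma card_proj_subset C Y Z : Y \subset Z -> (#|proj C Y| <= #|proj C Z|)%N.
Proof. by move=> /(proj_restrict C) <-; exact: leq_imset_card. Qed.

Lemma card_proj_setU1 C x Y : (#|proj C (x |: Y)| <= #|proj C Y| * #|A|)%N.
Proof.
pose extend (p : {ffun 'I_n -> option A} * A) : {ffun 'I_n -> option A} :=
  [ffun i => if i == x then Some p.2 else p.1 i].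
apply: (@leq_trans #|extend @: setX (proj C Y) [set: A]|); last first.
  by rewrite (leq_trans (leq_imset_card _ _)) // cardsX cardsT.
apply/subset_leq_card/subsetP => _ /imsetP[w wC ->].
apply/imsetP; exists ([ffun i => if i \in Y then Some (w i) else None], w x).
  by rewrite in_setX in_setT andbT; apply: imset_f.
apply/ffunP => i; rewrite !ffunE /=; case: eqP => [->|/eqP neq_ix].
  by rewrite setU11.
by rewrite in_setU1 (negbTE neq_ix).
Qed.

Lemma code_rank_set0 C : code_rank C set0 = 0.
Proof.
have card_le1 : (#|proj C set0| <= 1)%N.
  rewrite -(cards1 ([ffun _ => None] : {ffun 'I_n -> option A})).
  apply/subset_leq_card/subsetP => _ /imsetP[w _ ->].
  by rewrite inE; apply/eqP/ffunP => i; rewrite !ffunE inE.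
rewrite /code_rank; suff /eqP -> : trunc_log #|A| #|proj C set0| == 0%N by [].
by rewrite trunc_log_eq0; case: #|A| => [|[|p]] //=; rewrite (leq_trans card_le1).
Qed.

Hypothesis card_A_gt1 : (1 < #|A|)%N.

Lemma almost_affine_card_proj C X : almost_affine C ->
  #|proj C X| = (#|A| ^ trunc_log #|A| #|proj C X|)%N.
Proof. by case=> _ /(_ X)[r ->]; rewrite trunc_expnK. Qed.

Lemma code_rank_setU1 C x Y : almost_affine C ->
  code_rank C Y <= code_rank C (x |: Y) <= code_rank C Y + 1.
Proof.
move=> affC; rewrite /code_rank.
set r := trunc_log _ #|proj C Y|; set s := trunc_log _ #|proj C (x |: Y)|.
have card_Y : #|proj C Y| = (#|A| ^ r)%N := almost_affine_card_proj _ affC.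
have card_xY : #|proj C (x |: Y)| = (#|A| ^ s)%N := almost_affine_card_proj _ affC.
have := card_proj_subset C (subsetUr [set x] Y); have := card_proj_setU1 C x Y.
rewrite card_Y card_xY -expnSr !leq_exp2l // => le_sr le_rs.
by rewrite lez_nat le_rs -PoszD addn1 lez_nat le_sr.
Qed.

Lemma code_rank_incr_subset C D x Y :
  almost_affine C -> almost_affine D -> D \subset C ->
  code_rank D (x |: Y) - code_rank D Y <= code_rank C (x |: Y) - code_rank C Y.
Proof.
move=> affC affD sDC.
have /andP[leD1 leD2] := code_rank_setU1 x Y affD.
have /andP[leC1 leC2] := code_rank_setU1 x Y affC.
have [eqC | neqC] := eqVneq (code_rank C (x |: Y)) (code_rank C Y); last by lia.
have card_C : #|proj C (x |: Y)| = #|proj C Y|.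
  rewrite (almost_affine_card_proj _ affC) [RHS](almost_affine_card_proj _ affC).
  by move/eqP: eqC; rewrite /code_rank eqz_nat => /eqP ->.
have inj_C : {in proj C (x |: Y) &, injective (restrict Y)}.
  by apply/imset_injP; rewrite proj_restrict ?subsetUr // card_C.
have card_D : #|proj D (x |: Y)| = #|proj D Y|.
  rewrite -(proj_restrict D (subsetUr [set x] Y)); symmetry; apply: card_in_imset.
  by apply: sub_in2 inj_C; apply/subsetP/proj_subset.
by rewrite eqC !subrr /code_rank card_D subrr.
Qed.

Lemma unit_increasing_code_rank C : almost_affine C -> unit_increasing (code_rank C).
Proof. by move=> affC X x _; have := code_rank_setU1 x X affC; lia. Qed.
End Codes.

Section Flags.
Variables (A : finType) (n m : nat) (C : nat -> {set {ffun 'I_n -> A}}).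

Lemma rho_F_set0 : rho_F m C set0 = 0.
Proof. by rewrite /rho_F big1 // => i _; rewrite /rk code_rank_set0 mulr0. Qed.

Lemma theta_F_cobar : theta_F m C =1 cobar (rho_F m C).
Proof. by move=> X; rewrite /cobar -sumrB; apply: eq_bigr => i _; rewrite mulrBr. Qed.

Lemma eta_FE X :
  eta_F m C X = (odd m)%:R * #|X|%:Z + (-1) ^+ m * cobar (rho_F m C) X.
Proof.
rewrite /eta_F; under eq_bigr do rewrite dualE.
by rewrite alternating_sum_rev_sub -theta_F_cobar.
Qed.

Lemma pi_FE X : pi_F m C X = (odd m)%:R * #|X|%:Z + (-1) ^+ m * rho_F m C X.
Proof.
rewrite /pi_F; under eq_bigr do rewrite cobar_dual /rk code_rank_set0 addr0.
by rewrite alternating_sum_rev_sub.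
Qed.

Lemma eta_F_cases :
  if ~~ odd m then eta_F m C =1 cobar (rho_F m C) else eta_F m C =1 dual (rho_F m C).
Proof.
case odd_m: (odd m) => X /=; rewrite eta_FE -signr_odd odd_m /=.
  by rewrite dualE mul1r expr1 mulN1r.
by rewrite mul0r add0r expr0 mul1r.
Qed.

Lemma pi_F_cases :
  if ~~ odd m then pi_F m C =1 rho_F m C else pi_F m C =1 dual (cobar (rho_F m C)).
Proof.
case odd_m: (odd m) => X /=; rewrite pi_FE -signr_odd odd_m /=.
  by rewrite dual_cobar rho_F_set0 addr0 mul1r expr1 mulN1r.
by rewrite mul0r add0r expr0 mul1r.
Qed.

Hypotheses (card_A_gt1 : (1 < #|A|)%N) (flagC : is_flag m C).

Lemma unit_increasing_rho_F : unit_increasing (rho_F m C).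
Proof.
move=> X x xNX; rewrite /rho_F -sumrB; under eq_bigr do rewrite -mulrBr.
have [affC sub_flag] := flagC.
apply: alternating_sum1_bounds => [i /affC affCi | i /andP[i_gt0 i_ltm]].
  exact: unit_increasing_code_rank.
by apply: code_rank_incr_subset => //; [apply: affC | apply: affC | apply: sub_flag];
  rewrite ?i_gt0 ?(ltnW i_ltm) ?i_ltm.
Qed.
End Flags.

Theorem mainTheorem7 (A : finType) (n m : nat)
  (C : nat -> {set {ffun 'I_n -> A}})
  (hA : (1 < #|A|)%N) (hF : is_flag m C) :
  demi_matroid (eta_F m C) /\ demi_matroid (theta_F m C) /\ demi_matroid (pi_F m C) /\
  (theta_F m C =1 cobar (rho_F m C)) /\
  (if ~~ odd m then eta_F m C =1 cobar (rho_F m C) else eta_F m C =1 dual (rho_F m C)) /\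
  (if ~~ odd m then pi_F m C =1 rho_F m C else pi_F m C =1 dual (cobar (rho_F m C))).
Proof.
have rho_incr := unit_increasing_rho_F hA hF.
have demi_rho := demi_matroidP (rho_F_set0 m C) rho_incr.
have demi_cobar := demi_matroidP (cobar_set0 _) (unit_increasing_cobar rho_incr).
have demi_dual := demi_matroidP (dual_set0 _) (unit_increasing_dual rho_incr).
have demi_dual_cobar :=
  demi_matroidP (dual_set0 _) (unit_increasing_dual (unit_increasing_cobar rho_incr)).
have eta_eq := eta_F_cases m C; have pi_eq := pi_F_cases m C.
split; last split; last split; last split; last split => //.
- by case: (odd m) eta_eq => /= /demi_matroid_eq; apply.
- exact: demi_matroid_eq (theta_F_cobar m C) demi_cobar.
- by case: (odd m) pi_eq => /= /demi_matroid_eq; apply.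
- exact: theta_F_cobar.
Qed.
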